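(* Suppose Assumption A holds with $\beta,\gamma\in(0,\infty)$. Fix $\mu>0$ and $\sigma\in\mathcal X$, and let $\pi^{\mu,\sigma}$ be a perturbed equilibrium. Let $(\pi^t)_{t\ge0}$ be a sequence in $\mathcal X$, let $(\eta_t)$ be positive reals, and let $\xi_i^t\in\mathbb R^{d_i}$ be arbitrary vectors, such that for all $t\ge0$ $$D_\psi(\pi^{\mu,\sigma},\pi^{t+1})-D_\psi(\pi^{\mu,\sigma},\pi^t)+D_\psi(\pi^{t+1},\pi^t)\le\eta_t\sum_{i=1}^N\langle\nabla_{\pi_i}v_i(\pi^t)-\mu\nabla_{\pi_i}G(\pi_i^t,\sigma_i)+\xi_i^t,\pi_i^{t+1}-\pi_i^{\mu,\sigma}\rangle.$$ Then for all $t\ge0$, $$D_\psi(\pi^{\mu,\sigma},\pi^{t+1})-D_\psi(\pi^{\mu,\sigma},\pi^t)+D_\psi(\pi^{t+1},\pi^t)\le\eta_t\Big(\frac{\mu^2\gamma\rho^2(\gamma+2\beta)+8L^2}{2\mu\gamma\rho^2}D_\psi(\pi^{t+1},\pi^t)-\frac{\mu\gamma}2D_\psi(\pi^{\mu,\sigma},\pi^t)\Big)+\eta_t\sum_{i=1}^N\langle\xi_i^t,\pi_i^{t+1}-\pi_i^{\mu,\sigma}\rangle.$$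
   Context: Game. Let $N\ge1$. For each $i\in[N]$, $\mathcal X_i\subseteq\mathbb R^{d_i}$ is a nonempty compact convex set, and $\mathcal X=\prod_i\mathcal X_i$. Each $v_i:\mathcal X\to\mathbb R$ is differentiable, with block gradient $\nabla_{\pi_i}v_i$. The norm is Euclidean, with $\|\pi\|^2=\sum_i\|\pi_i\|^2$. The game is monotone: $\sum_i\langle\nabla_{\pi_i}v_i(\pi)-\nabla_{\pi_i}v_i(\pi'),\pi_i-\pi_i'\rangle\le0$. The game is $L$-smooth: $\sum_i\|\nabla_{\pi_i}v_i(\pi)-\nabla_{\pi_i}v_i(\pi')\|^2\le L^2\|\pi-\pi'\|^2$. Regularizer. $\psi:\mathcal X_i\to\mathbb R$ is differentiable and $\rho$-strongly convex with respect to $\|\cdot\|$. Bregman divergence: $D_\psi(x,y)=\psi(x)-\psi(y)-\langle\nabla\psi(y),x-y\rangle$, and $D_\psi(\pi,\pi')=\sum_iD_\psi(\pi_i,\pi_i')$. Perturbation. $G:\mathcal X_i\times\mathcal X_i\to[0,\infty)$ is differentiable in its first argument, with gradient $\nabla_{\pi_i}G$ in that argument. $G(\cdot,\sigma_i)$ is strictly convex with minimum $0$ at $\sigma_i$. For $\mu>0$ and $\sigma\in\mathcal X$, $\pi^{\mu,\sigma}$ is a profile with $\pi_i^{\mu,\sigma}\in\arg\max_{\pi_i}\{v_i(\pi_i,\pi^{\mu,\sigma}_{-i})-\mu G(\pi_i,\sigma_i)\}$ for all $i$. Assumption A: for all $\sigma_i,\pi_i,\pi_i'\in\mathcal X_i$,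 $$\gamma D_\psi(\pi_i',\pi_i)\le G(\pi_i',\sigma_i)-G(\pi_i,\sigma_i)-\langle\nabla_{\pi_i}G(\pi_i,\sigma_i),\pi_i'-\pi_i\rangle\le\beta D_\psi(\pi_i',\pi_i).$$ *)

From HB Require Import structures.
From mathcomp Require Import all_boot all_order all_algebra.
From mathcomp Require Import all_classical all_reals all_analysis.
Set Implicit Arguments. Unset Strict Implicit. Unset Printing Implicit Defensive.
Import Order.TTheory GRing.Theory Num.Theory.
Import numFieldNormedType.Exports.
Local Open Scope classical_set_scope.
Local Open Scope ring_scope.

Definition dotr {R : realType} {n : nat} (u w : 'rV[R]_n) : R :=
  \sum_(k < n) u 0 k * w 0 k.

Definition sqn {R : realType} {n : nat} (u : 'rV[R]_n) : R := dotr u u.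

Definition is_grad {R : realType} {n : nat} (f : 'rV[R]_n -> R^o)
    (x g : 'rV[R]_n) : Prop :=
  differentiable f x /\ forall h, 'd f x h = dotr g h.

Definition convex_rV {R : realType} {n : nat} (A : set 'rV[R]_n) : Prop :=
  forall x y (t : R), A x -> A y -> 0 <= t -> t <= 1 ->
    A (t *: x + (1 - t) *: y).

Definition prof (R : realType) (N : nat) (d : 'I_N -> nat) : Type :=
  forall i : 'I_N, 'rV[R]_(d i).

Definition in_prof {R : realType} {N : nat} {d : 'I_N -> nat}
    (X : forall i : 'I_N, set 'rV[R]_(d i)) (p : prof R d) : Prop :=
  forall i, X i (p i).

(* unilateral deviation (x_i, p_{-i}) *)
Definition upd {R : realType} {N : nat} {d : 'I_N -> nat}
    (p : prof R d) (i : 'I_N) (x : 'rV[R]_(d i)) : prof R d :=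
  fun j => match i =P j with
           | ReflectT e => eq_rect i (fun k => 'rV[R]_(d k)) x j e
           | ReflectF _ => p j
           end.

Definition bregman {R : realType} {n : nat} (psi : 'rV[R]_n -> R)
    (gpsi : 'rV[R]_n -> 'rV[R]_n) (x y : 'rV[R]_n) : R :=
  psi x - psi y - dotr (gpsi y) (x - y).

Definition bregman_prof {R : realType} {N : nat} {d : 'I_N -> nat}
    (psi : forall i : 'I_N, 'rV[R]_(d i) -> R)
    (gpsi : forall i : 'I_N, 'rV[R]_(d i) -> 'rV[R]_(d i))
    (p q : prof R d) : R :=
  \sum_(i < N) bregman (psi i) (gpsi i) (p i) (q i).

From HB Require Import structures.
From mathcomp Require Import all_boot all_order all_algebra.
From mathcomp Require Import all_classical all_reals all_analysis.
From mathcomp Require Import ring lra.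

Import Order.TTheory GRing.Theory Num.Theory.
Import numFieldNormedType.Exports.
Local Open Scope classical_set_scope.
Local Open Scope ring_scope.

(* Split the pairing <grad v(pi^t) - mu grad G(pi^t), pi^{t+1} - pi^{mu,sigma}>
   around the equilibrium pi^{mu,sigma}.  Monotonicity makes
   <grad v(pi^t) - grad v(pi^{mu,sigma}), pi^t - pi^{mu,sigma}> nonpositive, and so
   does the first-order condition of the perturbed equilibrium for
   <grad v(pi^{mu,sigma}) - mu grad G(pi^{mu,sigma}), pi^{t+1} - pi^{mu,sigma}>.
   The three-point identity for the Bregman divergence of G(., sigma_i), with
   Assumption A, turns the remaining mu-term into
   - mu gamma D(pi^{mu,sigma}, pi^t) - mu gamma D(pi^{t+1}, pi^{mu,sigma})
   + mu beta D(pi^{t+1}, pi^t).  The cross term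
   <grad v(pi^t) - grad v(pi^{mu,sigma}), pi^{t+1} - pi^t> is handled by Young's
   inequality, L-smoothness and the rho-strong convexity of psi, with the Young
   weight tuned so that it costs at most mu gamma / 4 * D(pi^{mu,sigma}, pi^t). *)

Section InnerProduct.
Context {R : realType} {n : nat}.
Implicit Types a b c : 'rV[R]_n.

Lemma dotrDl a b c : dotr (a + b) c = dotr a c + dotr b c.
Proof. by rewrite /dotr -big_split; apply: eq_bigr => k _; rewrite !mxE mulrDl. Qed.

Lemma dotrDr a b c : dotr c (a + b) = dotr c a + dotr c b.
Proof. by rewrite /dotr -big_split; apply: eq_bigr => k _; rewrite !mxE mulrDr. Qed.

Lemma dotrNl a b : dotr (- a) b = - dotr a b.
Proof. by rewrite /dotr -sumrN; apply: eq_bigr => k _; rewrite !mxE mulNr. Qed.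

Lemma dotrNr a b : dotr a (- b) = - dotr a b.
Proof. by rewrite /dotr -sumrN; apply: eq_bigr => k _; rewrite !mxE mulrN. Qed.

Lemma dotrZl (m : R) a b : dotr (m *: a) b = m * dotr a b.
Proof. by rewrite /dotr mulr_sumr; apply: eq_bigr => k _; rewrite !mxE mulrA. Qed.

Definition dotrE := (dotrDl, dotrDr, dotrNl, dotrNr, dotrZl).

Lemma sqn_ge0 a : 0 <= sqn a.
Proof. by apply: sumr_ge0 => k _; rewrite -expr2 sqr_ge0. Qed.

Lemma sqnC a b : sqn (a - b) = sqn (b - a).
Proof. by apply: eq_bigr => k _; rewrite !mxE; ring. Qed.

Lemma dotr_le_young a b (s : R) :
  0 < s -> dotr a b <= s / 2 * sqn a + (2 * s)^-1 * sqn b.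
Proof.
move=> s0; rewrite /sqn /dotr !mulr_sumr -big_split /=; apply: ler_sum => k _.
rewrite -subr_ge0.
have -> : s / 2 * (a 0 k * a 0 k) + (2 * s)^-1 * (b 0 k * b 0 k) - a 0 k * b 0 k
          = (s * a 0 k - b 0 k) ^+ 2 / (2 * s) by field; rewrite gt_eqF.
by rewrite divr_ge0 ?sqr_ge0 // mulr_ge0 // ltW.
Qed.

End InnerProduct.

Lemma bregman_three_point {R : realType} {n}
    (f : 'rV[R]_n -> R) (g : 'rV[R]_n -> 'rV[R]_n) x y p :
  dotr (g x - g p) (y - p) = bregman f g p x + bregman f g y p - bregman f g y x.
Proof. by rewrite /bregman !dotrE; ring. Qed.

Lemma dotr_step_split {R : realType} {n} (a b c e z x y p : 'rV[R]_n) (m : R) :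
  dotr (a - m *: c + z) (y - p) =
    dotr (a - b) (x - p) + dotr (a - b) (y - x) - m * dotr (c - e) (y - p)
    + dotr (b - m *: e) (y - p) + dotr z (y - p).
Proof. by rewrite !dotrE; ring. Qed.

Lemma diff_le0_at_max {R : realType} {n} (f : 'rV[R]_n -> R^o) (x v : 'rV[R]_n) :
  differentiable f x ->
  (forall t : R, 0 < t -> t <= 1 -> f (t *: v + x) <= f x) -> 'd f x v <= 0.
Proof.
move=> df fmax; rewrite -deriveE //.
have dv : derivable f x v by exact: diff_derivable.
rewrite /derive (cvg_at_rightE _ _ dv).
set q := (fun h : R => _).
have cq : q @ 0^'+ --> lim (q @ 0^'+).
  apply: cvgP; apply: cvg_trans dv; apply: cvg_fmap2.
  move=> A /=; rewrite /dnbhs /at_right /within /=; apply: filterS => y hA y0.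
  by apply: hA; rewrite gt_eqF.
apply: (cvgr_to_le cq); near=> h.
have h0 : 0 < h by near: h; exact: nbhs_right_gt.
have h1 : h <= 1 by near: h; exact: nbhs_right_le.
rewrite /q /= -[_ *: _]/(h^-1 * _) pmulr_rle0 ?invr_gt0 // subr_le0.
exact: fmax.
Unshelve. all: by end_near.
Qed.

Lemma is_gradBZ {R : realType} {n} {f h : 'rV[R]_n -> R^o} {x gf gh} (m : R) :
  is_grad f x gf -> is_grad h x gh -> is_grad (f - m *: h) x (gf - m *: gh).
Proof.
move=> [df dfE] [dh dhE].
have dmh : differentiable (m *: h) x by exact: differentiableZ.
split=> [|w]; first exact: differentiableB.
by rewrite diffB // diffZ //= dfE dhE !dotrE.
Qed.

Lemma is_grad_max_le0 {R : realType} {n}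
    {C : set 'rV[R]_n} {f : 'rV[R]_n -> R^o} {x g y} :
  convex_rV C -> C x -> C y -> is_grad f x g ->
  (forall z, C z -> f z <= f x) -> dotr g (y - x) <= 0.
Proof.
move=> Ccvx Cx Cy [df <-] fmax; apply: diff_le0_at_max => // t t0 t1.
apply: fmax; have -> : t *: (y - x) + x = t *: y + (1 - t) *: x.
  by rewrite scalerBr scalerBl scale1r [x - _]addrC addrA.
exact: Ccvx (ltW t0) t1.
Qed.

Lemma upd_id {R : realType} {N : nat} {d : 'I_N -> nat} (p : prof R d) i :
  @upd R N d p i (p i) = p.
Proof.
apply: functional_extensionality_dep => j; rewrite /upd.
by case: eqP => // e; case: j / e.
Qed.

Section PerturbedMirrorStep.
Context {R : realType} {N : nat} {d : 'I_N -> nat}.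
Context {X : forall i : 'I_N, set 'rV[R]_(d i)} {v : 'I_N -> prof R d -> R}
  {gv : forall i : 'I_N, prof R d -> 'rV[R]_(d i)}
  {psi : forall i : 'I_N, 'rV[R]_(d i) -> R}
  {gpsi : forall i : 'I_N, 'rV[R]_(d i) -> 'rV[R]_(d i)}
  {G : forall i : 'I_N, 'rV[R]_(d i) -> 'rV[R]_(d i) -> R}
  {gG : forall i : 'I_N, 'rV[R]_(d i) -> 'rV[R]_(d i) -> 'rV[R]_(d i)}
  {L rho beta gamma mu : R} {sigma p : prof R d}.

Local Notation D := (bregman_prof psi gpsi).

Hypothesis X_convex : forall i, convex_rV (X i).
Hypothesis v_grad : forall i {q}, in_prof X q ->
  is_grad (fun x : 'rV[R]_(d i) => v i (@upd R N d q i x)) (q i) (gv i q).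
Hypothesis monotone : forall {q q'}, in_prof X q -> in_prof X q' ->
  \sum_(i < N) dotr (gv i q - gv i q') (q i - q' i) <= 0.
Hypothesis smooth : forall {q q'}, in_prof X q -> in_prof X q' ->
  \sum_(i < N) sqn (gv i q - gv i q') <= L ^+ 2 * \sum_(i < N) sqn (q i - q' i).
Hypothesis rho_gt0 : 0 < rho.
Hypothesis psi_strongly_convex : forall {i a b}, X i a -> X i b ->
  psi i a + dotr (gpsi i a) (b - a) + rho / 2 * sqn (b - a) <= psi i b.
Hypothesis G_grad : forall {i a s}, X i a -> X i s ->
  is_grad (fun b => G i b s) a (gG i a s).
Hypothesis gamma_gt0 : 0 < gamma.
Hypothesis assumptionA : forall {i s a b}, X i s -> X i a -> X i b ->
  gamma * bregman (psi i) (gpsi i) b a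
    <= G i b s - G i a s - dotr (gG i a s) (b - a)
  /\ G i b s - G i a s - dotr (gG i a s) (b - a)
    <= beta * bregman (psi i) (gpsi i) b a.
Hypothesis mu_gt0 : 0 < mu.
Hypothesis sigma_in : in_prof X sigma.
Hypothesis p_in : in_prof X p.
Hypothesis p_equilibrium : forall {i a}, X i a ->
  v i (@upd R N d p i a) - mu * G i a (sigma i)
    <= v i p - mu * G i (p i) (sigma i).

Lemma bregman_prof_ge_sqn {q q'} : in_prof X q -> in_prof X q' ->
  rho / 2 * \sum_(i < N) sqn (q i - q' i) <= D q q'.
Proof.
move=> qX q'X; rewrite mulr_sumr; apply: ler_sum => i _.
have := psi_strongly_convex (q'X i) (qX i); rewrite /bregman; lra.
Qed.

Lemma bregman_prof_ge0 {q q'} : in_prof X q -> in_prof X q' -> 0 <= D q q'.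
Proof.
move=> qX q'X; apply: le_trans (bregman_prof_ge_sqn qX q'X).
apply: mulr_ge0; first by rewrite divr_ge0 ?ltW.
by apply: sumr_ge0 => i _; apply: sqn_ge0.
Qed.

Lemma equilibrium_first_order {q} : in_prof X q ->
  \sum_(i < N) dotr (gv i p - mu *: gG i (p i) (sigma i)) (q i - p i) <= 0.
Proof.
move=> qX; apply: sumr_le0 => i _.
apply: (is_grad_max_le0 (X_convex i) (p_in i) (qX i)).
  exact: is_gradBZ mu (v_grad i p_in) (G_grad (p_in i) (sigma_in i)).
by move=> a aX; have := p_equilibrium aX; rewrite -[in v i p](upd_id p i).
Qed.

Context {x y : prof R d}.
Hypotheses (x_in : in_prof X x) (y_in : in_prof X y).

Lemma perturbation_three_point :
  gamma * D p x + gamma * D y p - beta * D y x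
    <= \sum_(i < N) dotr (gG i (x i) (sigma i) - gG i (p i) (sigma i)) (y i - p i).
Proof.
rewrite /bregman_prof !mulr_sumr -big_split -sumrB /=; apply: ler_sum => i _.
rewrite (bregman_three_point (fun b => G i b (sigma i)) (fun b => gG i b (sigma i))).
have [px _] := assumptionA (sigma_in i) (x_in i) (p_in i).
have [yp _] := assumptionA (sigma_in i) (p_in i) (y_in i).
have [_ yx] := assumptionA (sigma_in i) (x_in i) (y_in i).
rewrite /bregman /= in px yp yx *; lra.
Qed.

Lemma cross_term_le {c : R} : 0 < c ->
  \sum_(i < N) dotr (gv i x - gv i p) (y i - x i)
    <= c / (4 * rho) * D p x + (c ^+ 2 + 8 * L ^+ 2) / (2 * c * rho) * D y x.
Proof.
move=> c_gt0; set K := c ^+ 2 + 8 * L ^+ 2.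
have L2_ge0 : 0 <= L ^+ 2 by exact: sqr_ge0.
have K_gt0 : 0 < K by rewrite /K; nra.
(* With this weight, s L^2 / 2 <= c / 8 and 1 / (2 s) = K / (4 c). *)
set s := 2 * c / K; have s_gt0 : 0 < s by rewrite divr_gt0 ?mulr_gt0.
set A := \sum_(i < N) sqn (gv i x - gv i p).
set Q := \sum_(i < N) sqn (p i - x i).
set W := \sum_(i < N) sqn (y i - x i).
have young : \sum_(i < N) dotr (gv i x - gv i p) (y i - x i)
    <= s / 2 * A + (2 * s)^-1 * W.
  by rewrite !mulr_sumr -big_split; apply: ler_sum => i _; apply: dotr_le_young.
have AQ : A <= L ^+ 2 * Q.
  by rewrite /Q (eq_bigr _ (fun i _ => sqnC (p i) (x i))); apply: smooth.
have QD := bregman_prof_ge_sqn p_in x_in.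
have WD := bregman_prof_ge_sqn y_in x_in.
have Q_ge0 : 0 <= Q by apply: sumr_ge0 => i _; apply: sqn_ge0.
apply: le_trans young _; apply: lerD.
- have cLK : c * L ^+ 2 / K <= c / 8 by rewrite ler_pdivrMr // /K; nra.
  apply: (le_trans (y := c * L ^+ 2 / K * Q)).
    have -> : c * L ^+ 2 / K * Q = s / 2 * (L ^+ 2 * Q).
      by rewrite /s; field; rewrite gt_eqF.
    by rewrite ler_wpM2l // divr_ge0 ?ltW.
  apply: (le_trans (y := c / 8 * Q)); first by rewrite ler_wpM2r.
  have -> : c / 8 * Q = c / (4 * rho) * (rho / 2 * Q) by field; rewrite gt_eqF.
  by rewrite ler_wpM2l // divr_ge0 ?mulr_ge0 ?ltW.
- have -> : (2 * s)^-1 * W = K / (2 * c * rho) * (rho / 2 * W).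
    by rewrite /s; field; rewrite !gt_eqF.
  by rewrite ler_wpM2l // divr_ge0 ?mulr_ge0 ?ltW.
Qed.

Lemma mirror_step_inner_product_le (xi : forall i : 'I_N, 'rV[R]_(d i)) :
  \sum_(i < N) dotr (gv i x - mu *: gG i (x i) (sigma i) + xi i) (y i - p i)
    <= (mu ^+ 2 * gamma * rho ^+ 2 * (gamma + 2 * beta) + 8 * L ^+ 2)
         / (2 * mu * gamma * rho ^+ 2) * D y x
       - mu * gamma / 2 * D p x + \sum_(i < N) dotr (xi i) (y i - p i).
Proof.
under eq_bigr => i _
  do rewrite (dotr_step_split _ (gv i p) _ (gG i (p i) (sigma i)) _ (x i)).
rewrite !big_split /= sumrN -mulr_sumr.
set c := mu * gamma * rho; have c_gt0 : 0 < c by rewrite /c !mulr_gt0.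
have cross := cross_term_le c_gt0.
have -> : (mu ^+ 2 * gamma * rho ^+ 2 * (gamma + 2 * beta) + 8 * L ^+ 2)
          / (2 * mu * gamma * rho ^+ 2)
          = mu * beta + (c ^+ 2 + 8 * L ^+ 2) / (2 * c * rho).
  by rewrite /c; field; rewrite !gt_eqF.
have c4 : c / (4 * rho) = mu * gamma / 4 by rewrite /c; field; rewrite gt_eqF.
rewrite c4 in cross.
have three : mu * (gamma * D p x + gamma * D y p - beta * D y x)
    <= mu * \sum_(i < N) dotr (gG i (x i) (sigma i) - gG i (p i) (sigma i)) (y i - p i).
  by apply: ler_wpM2l; [exact: ltW | exact: perturbation_three_point].
have monotone_xp := monotone x_in p_in.
have first_order := equilibrium_first_order y_in.
have Dyp_ge0 := bregman_prof_ge0 y_in p_in.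
have Dpx_ge0 := bregman_prof_ge0 p_in x_in.
have mu_gamma_gt0 : 0 < mu * gamma by rewrite mulr_gt0.
nra.
Qed.

End PerturbedMirrorStep.

Theorem lemma4 (R : realType) (N : nat) (d : 'I_N -> nat)
  (X : forall i : 'I_N, set 'rV[R]_(d i))
  (v : 'I_N -> prof R d -> R)
  (gv : forall i : 'I_N, prof R d -> 'rV[R]_(d i))
  (psi : forall i : 'I_N, 'rV[R]_(d i) -> R)
  (gpsi : forall i : 'I_N, 'rV[R]_(d i) -> 'rV[R]_(d i))
  (G : forall i : 'I_N, 'rV[R]_(d i) -> 'rV[R]_(d i) -> R)
  (gG : forall i : 'I_N, 'rV[R]_(d i) -> 'rV[R]_(d i) -> 'rV[R]_(d i))
  (L rho beta gamma mu : R)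
  (sigma pms : prof R d) (pi : nat -> prof R d) (eta : nat -> R)
  (xi : nat -> forall i : 'I_N, 'rV[R]_(d i)) :
  (0 < N)%N ->
  (forall i, X i !=set0) ->
  (forall i, compact (X i)) ->
  (forall i, convex_rV (X i)) ->
  (forall i p, in_prof X p -> is_grad (fun x : 'rV[R]_(d i) => v i (@upd R N d p i x)) (p i) (gv i p)) ->
  (forall p q, in_prof X p -> in_prof X q ->
     \sum_(i < N) dotr (gv i p - gv i q) (p i - q i) <= 0) ->
  (forall p q, in_prof X p -> in_prof X q ->
     \sum_(i < N) sqn (gv i p - gv i q) <= L ^+ 2 * \sum_(i < N) sqn (p i - q i)) ->
  0 < rho ->
  (forall i x, X i x -> is_grad (psi i) x (gpsi i x)) ->
  (forall i x y, X i x -> X i y ->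
     psi i x + dotr (gpsi i x) (y - x) + rho / 2 * sqn (y - x) <= psi i y) ->
  (forall i x s, X i x -> X i s -> is_grad (fun y => G i y s) x (gG i x s)) ->
  (forall i x s, X i x -> X i s -> 0 <= G i x s) ->
  (forall i s, X i s -> G i s s = 0) ->
  (forall i s x y (t : R), X i s -> X i x -> X i y -> x != y -> 0 < t -> t < 1 ->
     G i (t *: x + (1 - t) *: y) s < t * G i x s + (1 - t) * G i y s) ->
  0 < beta -> 0 < gamma ->
  (forall i s p p', X i s -> X i p -> X i p' ->
     gamma * bregman (psi i) (gpsi i) p' p
       <= G i p' s - G i p s - dotr (gG i p s) (p' - p)
     /\ G i p' s - G i p s - dotr (gG i p s) (p' - p)
       <= beta * bregman (psi i) (gpsi i) p' p) ->
  0 < mu ->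
  in_prof X sigma ->
  in_prof X pms ->
  (forall i x, X i x ->
     v i (@upd R N d pms i x) - mu * G i x (sigma i) <= v i pms - mu * G i (pms i) (sigma i)) ->
  (forall t, in_prof X (pi t)) ->
  (forall t, 0 < eta t) ->
  (forall t : nat,
     bregman_prof psi gpsi pms (pi t.+1) - bregman_prof psi gpsi pms (pi t)
       + bregman_prof psi gpsi (pi t.+1) (pi t)
     <= eta t * \sum_(i < N) dotr (gv i (pi t) - mu *: gG i (pi t i) (sigma i) + xi t i)
                                  (pi t.+1 i - pms i)) ->
  forall t : nat,
     bregman_prof psi gpsi pms (pi t.+1) - bregman_prof psi gpsi pms (pi t)
       + bregman_prof psi gpsi (pi t.+1) (pi t)
     <= eta t * ((mu ^+ 2 * gamma * rho ^+ 2 * (gamma + 2 * beta) + 8 * L ^+ 2)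
                   / (2 * mu * gamma * rho ^+ 2) * bregman_prof psi gpsi (pi t.+1) (pi t)
                 - mu * gamma / 2 * bregman_prof psi gpsi pms (pi t))
        + eta t * \sum_(i < N) dotr (xi t i) (pi t.+1 i - pms i).
Proof.
move=> _ _ _ X_convex v_grad monotone smooth rho_gt0 _ psi_convex G_grad _ _ _ _
  gamma_gt0 assumptionA mu_gt0 sigma_in pms_in pms_eq pi_in eta_gt0 step t.
rewrite -mulrDr; apply: le_trans (step t) _; apply: ler_wpM2l; first exact: ltW.
exact: (mirror_step_inner_product_le X_convex v_grad monotone smooth rho_gt0
  psi_convex G_grad gamma_gt0 assumptionA mu_gt0 sigma_in pms_in pms_eq
  (pi_in t) (pi_in t.+1)).
Qed.
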